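(* Let $\mathcal{G}=(V,\mathit{Act},\mathcal{R})$ be a normed BPA system. For all $\alpha,\gamma\in V^*$: $\alpha\gamma\sim\gamma$ if and only if $\alpha\in(R_\gamma)^*$, where $R_\gamma=\{X\in V\mid X\gamma\sim\gamma\}$.
   Context: A BPA system $\mathcal{G}=(V,\mathit{Act},\mathcal{R})$: finite variables $V$, finite actions $\mathit{Act}$ (possibly containing the silent action $\tau$), rules $A\xrightarrow{a}\alpha$ ($A\in V,\alpha\in V^*$). LTS $\mathcal{L}_\mathcal{G}$: states $V^*$, transitions $A\beta\xrightarrow{a}\alpha\beta$ for rules $A\xrightarrow{a}\alpha$, $\beta\in V^*$. $\mathcal{G}$ is normed if every variable $A$ satisfies $A\xrightarrow{w}\varepsilon$ for some $w\in\mathit{Act}^*$. $\sim$ denotes branching bisimilarity in $\mathcal{L}_\mathcal{G}$ (largest relation $\mathcal{B}$ such that for $(s,t)\in\mathcal{B}$ each move $s\xrightarrow{a}s'$ is matched by $a=\tau$ with $(s',t)\in\mathcal{B}$, or by a path $t=t_0\xrightarrow{\tau}\cdots\xrightarrow{\tau}t_k\xrightarrow{a}t'$ with $(s',t')\in\mathcal{B}$, $(s,t_i)\in\mathcal{B}$ for $i\in[1,k]$; and symmetrically). *)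

From mathcomp Require Import all_boot.
Set Implicit Arguments. Unset Strict Implicit. Unset Printing Implicit Defensive.

(* A BPA system: variables V (finite), visible actions A (finite); the label
   set is [option A], where [None] is the silent action tau (rules may or may
   not use it, so Act "possibly contains tau"). *)
Definition rule (V A : finType) := (V * option A * seq V)%type.

Section BPA.
Variables (V A : finType) (R : seq (rule V A)).

Definition step (s : seq V) (a : option A) (t : seq V) : Prop :=
  exists X beta alpha, s = X :: beta /\ t = alpha ++ beta /\ (X, a, alpha) \in R.

Inductive reach : seq V -> seq V -> Prop :=
| reach_refl s : reach s s
| reach_step s a t u : step s a t -> reach t u -> reach s u.

Definition normed : Prop := forall X : V, reach [:: X] [::].

Inductive tau_path (P : seq V -> Prop) (t : seq V) : seq V -> Prop :=
| tau_path_refl : tau_path P t t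
| tau_path_step u v : tau_path P t u -> step u None v -> P v -> tau_path P t v.

Definition bmatch (B : seq V -> seq V -> Prop) (s t : seq V) (a : option A) (s' : seq V) : Prop :=
  (a = None /\ B s' t) \/
  exists tk t', tau_path (B s) t tk /\ step tk a t' /\ B s' t'.

Definition branching_bisimulation (B : seq V -> seq V -> Prop) : Prop :=
  forall s t, B s t ->
    (forall a s', step s a s' -> bmatch B s t a s') /\
    (forall a t', step t a t' -> bmatch (fun x y => B y x) t s a t').

Definition bbisim (s t : seq V) : Prop :=
  exists B, branching_bisimulation B /\ B s t.

End BPA.

(* Call a transition inert if it is silent and stays within its branching
   bisimilarity class, and measure a path by the number of its non-inert
   steps.  A path ending in the empty word transfers to any bisimilar state
   without increasing this cost.  Let k be the least cost with which gamma
   reaches the empty word.  If alpha gamma ~ gamma, then alpha gamma reaches the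
   empty word with cost at most k; since in BPA such a path must pass through
   gamma and its remainder costs at least k, its prefix from alpha gamma to
   gamma costs nothing, so it consists of inert steps only and visits every
   suffix X alpha' gamma of alpha gamma.
   Hence X alpha' gamma ~ alpha' gamma ~ gamma, and by congruence
   X gamma ~ X alpha' gamma ~ gamma.  The converse follows from congruence and
   transitivity. *)

From mathcomp Require Import all_boot zify.
From Stdlib Require Import ClassicalEpsilon.
Set Implicit Arguments. Unset Strict Implicit. Unset Printing Implicit Defensive.

Lemma ex_minimal_nat (P : nat -> Prop) :
  (exists n, P n) -> exists n, P n /\ forall m, P m -> n <= m.
Proof.
pose p m : bool := excluded_middle_informative (P m).
have pP m : reflect (P m) (p m) by rewrite /p; case: excluded_middle_informative; constructor.
move=> [n /pP pn]; case: (ex_minnP (ex_intro p n pn)) => m /pP Pm min_m.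
by exists m; split=> // k /pP; apply: min_m.
Qed.

Section BranchingBisimilarity.
Variables (V A : finType) (R : seq (rule V A)).
Local Notation bb := (bbisim R).

Lemma tau_path_weaken (P Q : seq V -> Prop) t u :
  (forall x, P x -> Q x) -> tau_path R P t u -> tau_path R Q t u.
Proof.
move=> PQ; elim=> [|u0 v _ IH st Pv]; first exact: tau_path_refl.
by apply: tau_path_step IH st _; apply: PQ.
Qed.

Lemma tau_path_cat (P Q : seq V -> Prop) t u w :
  tau_path R P t u -> tau_path R Q u w -> (forall x, Q x -> P x) -> tau_path R P t w.
Proof.
move=> tp tq QP; elim: tq=> [|u0 v _ IH st Qv] //.
by apply: tau_path_step IH st _; apply: QP.
Qed.

Lemma bmatch_weaken (B B' : seq V -> seq V -> Prop) s t a s' :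
  (forall x y, B x y -> B' x y) -> bmatch R B s t a s' -> bmatch R B' s t a s'.
Proof.
move=> BB' [[-> Bs't]|[tk [t' [tp [st Bs't']]]]]; first by left; split; last apply: BB'.
right; exists tk, t'; split; first exact: tau_path_weaken (BB' s) tp.
by split; last apply: BB'.
Qed.

Lemma branching_bisimulation_sym B :
  branching_bisimulation R B -> branching_bisimulation R (fun x y => B y x).
Proof. by move=> HB x y /HB [fwd bwd]; split=> a z st; [apply: bwd | apply: fwd]. Qed.

Lemma bbisim_refl s : bb s s.
Proof.
exists eq; split=> // x _ <-.
by split=> a z st; right; exists x, z; split=> //; apply: tau_path_refl.
Qed.

Lemma bbisim_sym s t : bb s t -> bb t s.
Proof.
by case=> B [HB Bst]; exists (fun x y => B y x); split=> //; apply: branching_bisimulation_sym.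
Qed.

Lemma bisim_tau_path (B1 B2 : seq V -> seq V -> Prop) s u t uk :
  branching_bisimulation R B2 -> B1 s u -> B2 u t -> tau_path R (B1 s) u uk ->
  exists tk, [/\ tau_path R (fun x => exists y, B1 s y /\ B2 y x) t tk, B2 uk tk & B1 s uk].
Proof.
move=> HB2 B1su B2ut; elim=> [|ui v _ [tc [tp B2ui B1ui]] st B1v].
  by exists t; split=> //; apply: tau_path_refl.
have [fwd _] := HB2 _ _ B2ui.
case: (fwd _ _ st) => [[_ B2v]|[T [T' [tp2 [st2 B2vT']]]]]; first by exists tc.
exists T'; split=> //; apply: (tau_path_step (u := T)) st2 _; last by exists v.
by apply: tau_path_cat tp tp2 _ => x B2x; exists ui.
Qed.

Lemma bmatch_compose (B1 B2 : seq V -> seq V -> Prop) s u t a s' :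
  branching_bisimulation R B1 -> branching_bisimulation R B2 -> B1 s u -> B2 u t ->
  step R s a s' -> bmatch R (fun x y => exists z, B1 x z /\ B2 z y) s t a s'.
Proof.
move=> HB1 HB2 B1su B2ut st; have [fwd1 _] := HB1 _ _ B1su.
case: (fwd1 _ _ st) => [[-> B1s'u]|[uk [u' [tp [st1 B1s'u']]]]].
  by left; split=> //; exists u.
have [tc [tp' B2uktc B1suk]] := bisim_tau_path HB2 B1su B2ut tp.
have [fwd2 _] := HB2 _ _ B2uktc.
case: (fwd2 _ _ st1) => [[-> B2u'tc]|[T [T' [tp2 [st2 B2u'T']]]]].
  case: tp' B2u'tc => [|tc0 tc1 tp0 st0 _] B2u'tc; first by left; split=> //; exists u'.
  by right; exists tc0, tc1; split=> //; split=> //; exists u'.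
right; exists T, T'; split; first by apply: tau_path_cat tp' tp2 _ => x B2x; exists uk.
by split=> //; exists u'.
Qed.

Lemma bbisim_trans s u t : bb s u -> bb u t -> bb s t.
Proof.
move=> bbsu bbut; exists (fun x y => exists z, bb x z /\ bb z y); split; last by exists u.
move=> x y [z [[B1 [HB1 B1xz]] [B2 [HB2 B2zy]]]].
have lift p q : (exists z', B1 p z' /\ B2 z' q) -> exists z', bb p z' /\ bb z' q.
  by case=> z' [B1pz' B2z'q]; exists z'; split; [exists B1 | exists B2].
have lift_sym p q : (exists z', B2 z' p /\ B1 q z') -> exists z', bb q z' /\ bb z' p.
  by case=> z' [B2z'p B1qz']; exists z'; split; [exists B1 | exists B2].
split=> a x' st; first exact: bmatch_weaken lift (bmatch_compose HB1 HB2 B1xz B2zy st).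
apply: bmatch_weaken lift_sym _.
exact: bmatch_compose (branching_bisimulation_sym HB2) (branching_bisimulation_sym HB1) B2zy B1xz st.
Qed.

Definition catl_closure x y := exists beta s t, [/\ x = beta ++ s, y = beta ++ t & bb s t].

Lemma catl_closure_sym x y : catl_closure x y -> catl_closure y x.
Proof. by case=> beta [s [t [-> -> /bbisim_sym bbts]]]; exists beta, t, s. Qed.

Lemma catl_closure_bmatch beta s t a x' : bb s t -> step R (beta ++ s) a x' ->
  bmatch R catl_closure (beta ++ s) (beta ++ t) a x'.
Proof.
case: beta => [|Y beta] /= bbst st.
  case: bbst => B [HB Bst]; have [fwd _] := HB _ _ Bst.
  apply: bmatch_weaken (fwd _ _ st) => p q Bpq.
  by exists [::], p, q; split=> //; exists B.
case: st => [X [b [al [[-> <-] [-> Xal]]]]].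
right; exists (X :: beta ++ t), (al ++ beta ++ t); split; first exact: tau_path_refl.
split; first by exists X, (beta ++ t), al.
by exists (al ++ beta), s, t; rewrite -!catA.
Qed.

Lemma bbisim_catl beta s t : bb s t -> bb (beta ++ s) (beta ++ t).
Proof.
move=> bbst; exists catl_closure; split; last by exists beta, s, t.
move=> x y [b [s0 [t0 [-> -> bbst0]]]]; split=> a z st; first exact: catl_closure_bmatch.
apply: bmatch_weaken catl_closure_sym _.
exact: catl_closure_bmatch (bbisim_sym bbst0) st.
Qed.

Lemma step_nil a t : ~ step R [::] a t.
Proof. by case=> X [b [al []]]. Qed.

Lemma tau_path_nil (P : seq V -> Prop) tk : tau_path R P [::] tk -> tk = [::].
Proof. by elim=> // u v _ -> /step_nil. Qed.

Lemma reach_catr s u w : reach R s u -> reach R (s ++ w) (u ++ w).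
Proof.
elim=> [s0|s0 a t u0 [X [b [al [-> [-> Xal]]]]] _ IH]; first exact: reach_refl.
by apply: (reach_step (a := a)) IH; exists X, (b ++ w), al; rewrite catA.
Qed.

Lemma reach_trans s u w : reach R s u -> reach R u w -> reach R s w.
Proof. by elim=> // s0 a t u0 st _ IH /IH; apply: reach_step st. Qed.

Lemma normed_reach_nil : normed R -> forall w, reach R w [::].
Proof.
move=> nR; elim=> [|X w IH]; first exact: reach_refl.
exact: reach_trans (reach_catr w (nR X)) IH.
Qed.

Inductive cost_path : seq V -> seq V -> nat -> Prop :=
| cost_path_refl s : cost_path s s 0
| cost_path_inert s s' u k : step R s None s' -> bb s s' -> cost_path s' u k -> cost_path s u k
| cost_path_step s a s' u k : step R s a s' -> cost_path s' u k -> cost_path s u k.+1.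

Lemma reach_cost_path s u : reach R s u -> exists k, cost_path s u k.
Proof.
elim=> [s0|s0 a t u0 st _ [k cp]]; first by exists 0; apply: cost_path_refl.
by exists k.+1; apply: cost_path_step st cp.
Qed.

Lemma cost_path_cat s u w k1 k2 :
  cost_path s u k1 -> cost_path u w k2 -> cost_path s w (k1 + k2).
Proof.
elim=> [//|s0 s' u0 k st bbss' _ IH|s0 a s' u0 k st _ IH] cp.
  exact: cost_path_inert st bbss' (IH cp).
exact: cost_path_step st (IH cp).
Qed.

Lemma cost_path0_bbisim s u : cost_path s u 0 -> bb s u.
Proof.
move E : 0 => k cp; elim: cp E => [s0 _|s0 s' u0 k0 _ bbss' _ IH E|//].
  exact: bbisim_refl.
exact: bbisim_trans bbss' (IH E).
Qed.

Lemma tau_path_cost_path0 (P : seq V -> Prop) s t tk : (forall v, P v -> bb s v) ->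
  bb s t -> tau_path R P t tk -> cost_path t tk 0 /\ bb s tk.
Proof.
move=> Pbb bbst; elim=> [|u v _ [cp bbsu] st Pv]; first by split; first apply: cost_path_refl.
split; last exact: Pbb.
have inert := cost_path_inert st (bbisim_trans (bbisim_sym bbsu) (Pbb _ Pv)) (cost_path_refl v).
by rewrite -(addn0 0); apply: cost_path_cat cp inert.
Qed.

(* The empty word has no moves, so every move of a state bisimilar to it is inert. *)
Lemma bbisim_nil_cost_path0 t : reach R t [::] -> bb t [::] -> cost_path t [::] 0.
Proof.
move E : [::] => nil r; elim: r E => [s _ _|s a s' u st _ IH E bbsu]; first exact: cost_path_refl.
subst u; case: (bbsu) => B [HB Bsnil]; have [fwd _] := HB _ _ Bsnil.
case: (fwd _ _ st) => [[Ea Bs'nil]|[tk [t' [/tau_path_nil Etk [st']]]]]; last first.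
  by rewrite Etk in st'; case: (step_nil st').
have bbs'nil : bb s' [::] by exists B.
rewrite Ea in st; apply: cost_path_inert st _ (IH erefl bbs'nil).
exact: bbisim_trans bbsu (bbisim_sym bbs'nil).
Qed.

Lemma cost_path_transfer s t k : normed R -> cost_path s [::] k -> bb s t ->
  exists2 k', k' <= k & cost_path t [::] k'.
Proof.
move=> nR; move E : [::] => nil cp; elim: cp E t => [s0 <- t bbst|s0 s' u k0 _ bbss' _ IH E t bbst|].
- by exists 0 => //; apply: bbisim_nil_cost_path0 (normed_reach_nil nR t) (bbisim_sym bbst).
- exact: IH E t (bbisim_trans (bbisim_sym bbss') bbst).
move=> s0 a s' u k0 st _ IH E t [B [HB Bs0t]]; have [fwd _] := HB _ _ Bs0t.
case: (fwd _ _ st) => [[_ Bs't]|[tk [t' [tp [st' Bs't']]]]].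
  by case: (IH E t) => [|k' le cp]; [exists B | exists k' => //; apply: leqW].
have bbB x y : B x y -> bb x y by exists B.
have [cp_tk _] := tau_path_cost_path0 (@bbB s0) (bbB _ _ Bs0t) tp.
case: (IH E t') => [|k' le cp]; first exact: bbB.
by exists k'.+1 => //; rewrite -(add0n k'.+1); apply: cost_path_cat cp_tk (cost_path_step st' cp).
Qed.

(* A BPA path from [d ++ z ++ u] to [u] rewrites [d] away before touching
   [z ++ u], so it passes through [z ++ u]. *)
Lemma cost_path_split s u k d w z : cost_path s u k -> s = d ++ w -> w = z ++ u ->
  exists k1 k2, [/\ k = k1 + k2, cost_path s w k1 & cost_path w u k2].
Proof.
move=> cp; elim: cp d => [s0|s0 s' u0 k0 st bbss' cp IH|s0 a s' u0 k0 st cp IH] d Es Ew.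
- have : size d + size z = 0 by move/(congr1 size): Es; rewrite Ew !size_cat; lia.
  case: d z Ew {Es} => [|? ?] [|? ?] //= -> _.
  by exists 0, 0; split=> //; apply: cost_path_refl.
- case: d Es => [|Y d] /= Es.
    exists 0, k0; rewrite Es; split; [done | exact: cost_path_refl | ].
    by rewrite -Es; apply: cost_path_inert st bbss' cp.
  move: st bbss' IH; rewrite Es => -[X [b [al [[<- <-] [-> Yal]]]]] bbss' IH.
  have [k1 [k2 [-> cp1 cp2]]] := IH (al ++ d) (catA _ _ _) Ew.
  exists k1, k2; split=> //; apply: cost_path_inert bbss' cp1.
  by exists Y, (d ++ w), al.
- case: d Es => [|Y d] /= Es.
    exists 0, k0.+1; rewrite Es; split; [done | exact: cost_path_refl | ].
    by rewrite -Es; apply: cost_path_step st cp.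
  move: st IH; rewrite Es => -[X [b [al [[<- <-] [-> Yal]]]]] IH.
  have [k1 [k2 [-> cp1 cp2]]] := IH (al ++ d) (catA _ _ _) Ew.
  exists k1.+1, k2; split=> //; apply: (cost_path_step (a := a)) cp1.
  by exists Y, (d ++ w), al.
Qed.

Lemma bbisim_cat_cost_path0 alpha gamma : normed R ->
  bb (alpha ++ gamma) gamma -> cost_path (alpha ++ gamma) gamma 0.
Proof.
move=> nR bbag.
have [k [cp_min min_k]] := ex_minimal_nat (reach_cost_path (normed_reach_nil nR gamma)).
have [k' le cp] := cost_path_transfer nR cp_min (bbisim_sym bbag).
have [k1 [k2 [Ek' cp1 /min_k le2]]] := cost_path_split cp erefl (esym (cats0 gamma)).
by have <- : k1 = 0 by lia.
Qed.

Lemma cost_path0_mem_bbisim alpha gamma X : X \in alpha ->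
  cost_path (alpha ++ gamma) gamma 0 -> bb (X :: gamma) gamma.
Proof.
case/splitPr => a1 a2; rewrite -catA => cp.
have [k1 [k2 [Ek _ cp2]]] := cost_path_split (d := a1) (z := X :: a2) cp erefl erefl.
have [k3 [k4 [Ek' cpX cpa2]]] := cost_path_split (d := [:: X]) (z := a2) cp2 erefl erefl.
have /cost_path0_bbisim bba2 : cost_path (a2 ++ gamma) gamma 0 by have <- : k4 = 0 by lia.
have /cost_path0_bbisim bbX : cost_path (X :: a2 ++ gamma) (a2 ++ gamma) 0.
  by have <- : k3 = 0 by lia.
exact: bbisim_trans (bbisim_catl [:: X] (bbisim_sym bba2)) (bbisim_trans bbX bba2).
Qed.

Lemma mem_bbisim_cat alpha gamma :
  (forall X, X \in alpha -> bb (X :: gamma) gamma) -> bb (alpha ++ gamma) gamma.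
Proof.
elim: alpha => [|X alpha IH] bbX /=; first exact: bbisim_refl.
apply: bbisim_trans (bbisim_catl [:: X] (IH _)) (bbX X (mem_head X alpha)).
by move=> Y Yalpha; apply: bbX; rewrite in_cons Yalpha orbT.
Qed.

End BranchingBisimilarity.

Theorem proposition4p6 (V A : finType) (R : seq (rule V A)) :
  normed R ->
  forall alpha gamma : seq V,
    bbisim R (alpha ++ gamma) gamma <->
    (forall X, X \in alpha -> bbisim R (X :: gamma) gamma).
Proof.
move=> nR alpha gamma; split; last exact: mem_bbisim_cat.
move=> /(bbisim_cat_cost_path0 nR) cp X Xalpha.
exact: cost_path0_mem_bbisim Xalpha cp.
Qed.
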